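(* Consider the system $\dot X=(1-Y)X$, $\dot Y=(X-U)Y$ on $\{X>0,Y>0\}$ and the function $$V(X,Y)=\Psi(1/X)+\Psi(Y/X).$$ Under the feedback $U=Y+\frac{Y-X}{Y}$, along closed-loop solutions $$\dot V=-\frac{(X-1)^2}{X}-\frac{(Y-X)^2}{XY},$$ which is negative definite on $\{X>0,Y>0\}$ with respect to $(1,1)$. Moreover, $V$ is positive definite with respect to $(1,1)$ and radially unbounded on the quadrant.
   Context: $\Psi(S)=S-1-\ln S$ for $S>0$. Radially unbounded on the quadrant means $V\to\infty$ as $(X,Y)$ approaches $\{X=0\}\cup\{Y=0\}$ or as $X+Y\to\infty$. *)

From Stdlib Require Import Reals.
Open Scope R_scope.

Definition Psi (S : R) : R := S - 1 - ln S.

Definition V (X Y : R) : R := Psi (1 / X) + Psi (Y / X).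

Definition Ufb (X Y : R) : R := Y + (Y - X) / Y.

Definition Vdot (X Y : R) : R := - ((X - 1) ^ 2 / X) - (Y - X) ^ 2 / (X * Y).

(* Everything rests on ln s <= s - 1, with equality only at s = 1: it makes
   Psi nonnegative with its only zero at 1, and, applied to s/2, it gives
   2 ln s < s, so that Psi s >= |ln s| - 1.  Since ln (1/X) = - ln X and
   ln (Y/X) = ln Y - ln X, the triangle inequality then bounds V X Y below by
   both |ln X| - 2 and |ln Y| - 2, which blow up at the boundary of the
   quadrant and at infinity. *)
From Stdlib Require Import Reals Lra.
Open Scope R_scope.

Lemma ln_lt_sub1 s : 0 < s -> s <> 1 -> ln s < s - 1.
Proof.
  intros s_gt0 s_neq1.
  pose proof (exp_ineq1 (ln s) (ln_neq_0 s s_neq1 s_gt0)) as exp_bound.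
  rewrite exp_ln in exp_bound by exact s_gt0; lra.
Qed.

Lemma ln_le_sub1 s : 0 < s -> ln s <= s - 1.
Proof.
  intros s_gt0.
  pose proof (exp_ineq1_le (ln s)) as exp_bound.
  rewrite exp_ln in exp_bound by exact s_gt0; lra.
Qed.

Lemma ln_div a b : 0 < a -> 0 < b -> ln (a / b) = ln a - ln b.
Proof.
  intros a_gt0 b_gt0; unfold Rdiv.
  rewrite ln_mult, ln_Rinv; [ring | exact b_gt0 | exact a_gt0 |].
  now apply Rinv_0_lt_compat.
Qed.

Lemma Psi_1 : Psi 1 = 0.
Proof. unfold Psi; rewrite ln_1; ring. Qed.

Lemma Psi_ge0 s : 0 < s -> 0 <= Psi s.
Proof. intros s_gt0; unfold Psi; pose proof (ln_le_sub1 s s_gt0); lra. Qed.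

Lemma Psi_gt0 s : 0 < s -> s <> 1 -> 0 < Psi s.
Proof. intros s_gt0 s_neq1; unfold Psi; pose proof (ln_lt_sub1 s s_gt0 s_neq1); lra. Qed.

Lemma Psi_ge_abs_ln s : 0 < s -> Rabs (ln s) - 1 <= Psi s.
Proof.
  intros s_gt0; unfold Psi, Rabs; destruct (Rcase_abs (ln s)); [lra |].
  pose proof (ln_lt_sub1 2 ltac:(lra) ltac:(lra)) as ln2_lt1.
  pose proof (ln_le_sub1 (s / 2) ltac:(lra)) as ln_half.
  rewrite ln_div in ln_half by lra; lra.
Qed.

Lemma derivable_pt_lim_Psi s : 0 < s -> derivable_pt_lim Psi s (1 - / s).
Proof.
  intros s_gt0.
  change Psi with (minus_fct (minus_fct id (fct_cte 1)) ln).
  apply derivable_pt_lim_minus; [| exact (derivable_pt_lim_ln s s_gt0)].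
  pose proof (derivable_pt_lim_minus id (fct_cte 1) s 1 0
    (derivable_pt_lim_id s) (derivable_pt_lim_const 1 s)) as d_shift.
  rewrite Rminus_0_r in d_shift; exact d_shift.
Qed.

Lemma derivable_pt_lim_Psi_comp f t l :
  0 < f t -> derivable_pt_lim f t l ->
  derivable_pt_lim (fun s => Psi (f s)) t ((1 - / f t) * l).
Proof.
  intros ft_gt0 df.
  exact (derivable_pt_lim_comp f Psi t l _ df (derivable_pt_lim_Psi _ ft_gt0)).
Qed.

Lemma derivable_pt_lim_V_comp (x y : R -> R) t dx dy :
  0 < x t -> 0 < y t -> derivable_pt_lim x t dx -> derivable_pt_lim y t dy ->
  derivable_pt_lim (fun s => V (x s) (y s)) t
    ((2 * x t - 1 - y t) / x t ^ 2 * dx + (y t - x t) / (x t * y t) * dy).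
Proof.
  intros xt_gt0 yt_gt0 d_x d_y.
  assert (inv_gt0 : 0 < (fct_cte 1 / x)%F t)
    by (unfold div_fct, fct_cte; apply Rdiv_lt_0_compat; lra).
  assert (ratio_gt0 : 0 < (y / x)%F t)
    by (unfold div_fct; apply Rdiv_lt_0_compat; lra).
  pose proof (derivable_pt_lim_div (fct_cte 1) x t 0 dx
                (derivable_pt_lim_const 1 t) d_x ltac:(lra)) as d_inv.
  pose proof (derivable_pt_lim_div y x t dy dx d_y d_x ltac:(lra)) as d_ratio.
  pose proof (derivable_pt_lim_plus _ _ t _ _
    (derivable_pt_lim_Psi_comp _ t _ inv_gt0 d_inv)
    (derivable_pt_lim_Psi_comp _ t _ ratio_gt0 d_ratio)) as d_V.
  unfold plus_fct, div_fct, fct_cte, Rsqr in d_V.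
  match goal with |- derivable_pt_lim _ _ ?l =>
    match type of d_V with derivable_pt_lim _ _ ?l' =>
      replace l with l' by (field; lra) end end.
  exact d_V.
Qed.

Lemma V_closed_loop_derivative (x y : R -> R) t :
  0 < x t -> 0 < y t ->
  derivable_pt_lim x t ((1 - y t) * x t) ->
  derivable_pt_lim y t ((x t - Ufb (x t) (y t)) * y t) ->
  derivable_pt_lim (fun s => V (x s) (y s)) t (Vdot (x t) (y t)).
Proof.
  intros xt_gt0 yt_gt0 d_x d_y.
  pose proof (derivable_pt_lim_V_comp x y t _ _ xt_gt0 yt_gt0 d_x d_y) as d_V.
  replace (Vdot (x t) (y t)) with
    ((2 * x t - 1 - y t) / x t ^ 2 * ((1 - y t) * x t) +
     (y t - x t) / (x t * y t) * ((x t - Ufb (x t) (y t)) * y t)).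
  - exact d_V.
  - unfold Vdot, Ufb; field; lra.
Qed.

Lemma Vdot_negative_definite :
  Vdot 1 1 = 0 /\
  forall X Y, 0 < X -> 0 < Y -> (X, Y) <> (1, 1) -> Vdot X Y < 0.
Proof.
  split; [unfold Vdot; field |].
  intros X Y X_gt0 Y_gt0 XY_neq.
  assert (sq_gt0 : forall a, a <> 0 -> 0 < a ^ 2).
  { intros a a_neq0; rewrite <- Rsqr_pow2; exact (Rsqr_pos_lt a a_neq0). }
  assert (XY_gt0 : 0 < X * Y) by nra.
  unfold Vdot; destruct (Req_dec X 1) as [-> | X_neq1].
  - assert (0 < (Y - 1) ^ 2 / (1 * Y)).
    { apply Rdiv_lt_0_compat; [apply sq_gt0 | lra].
      intros Y_eq1; apply XY_neq; f_equal; lra. }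
    assert (0 <= (1 - 1) ^ 2 / 1) by (unfold Rdiv; nra).
    lra.
  - assert (0 < (X - 1) ^ 2 / X) by (apply Rdiv_lt_0_compat; [apply sq_gt0 |]; lra).
    assert (0 <= (Y - X) ^ 2 / (X * Y)).
    { apply Rmult_le_pos; [apply pow2_ge_0 | left; now apply Rinv_0_lt_compat]. }
    lra.
Qed.

Lemma V_positive_definite :
  V 1 1 = 0 /\
  forall X Y, 0 < X -> 0 < Y -> (X, Y) <> (1, 1) -> 0 < V X Y.
Proof.
  split.
  - unfold V; replace (1 / 1) with 1 by field; rewrite Psi_1; ring.
  - intros X Y X_gt0 Y_gt0 XY_neq; unfold V.
    assert (inv_gt0 : 0 < 1 / X) by (apply Rdiv_lt_0_compat; lra).
    assert (ratio_gt0 : 0 < Y / X) by (apply Rdiv_lt_0_compat; lra).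
    pose proof (Psi_ge0 _ inv_gt0); pose proof (Psi_ge0 _ ratio_gt0).
    destruct (Req_dec X 1) as [-> | X_neq1].
    + assert (0 < Psi (Y / 1)).
      { apply Psi_gt0; [exact ratio_gt0 |].
        intros Y_eq1; apply XY_neq; f_equal; lra. }
      lra.
    + assert (0 < Psi (1 / X)).
      { apply Psi_gt0; [exact inv_gt0 |].
        intros inv_eq1; apply X_neq1.
        replace X with (/ (1 / X)) by (field; lra); rewrite inv_eq1; apply Rinv_1. }
      lra.
Qed.

Lemma V_ge_abs_ln X Y :
  0 < X -> 0 < Y -> Rabs (ln X) - 2 <= V X Y /\ Rabs (ln Y) - 2 <= V X Y.
Proof.
  intros X_gt0 Y_gt0; unfold V.
  pose proof (Psi_ge_abs_ln (1 / X) ltac:(apply Rdiv_lt_0_compat; lra)) as Psi_inv.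
  pose proof (Psi_ge_abs_ln (Y / X) ltac:(apply Rdiv_lt_0_compat; lra)) as Psi_ratio.
  rewrite ln_div, ln_1, Rminus_0_l, Rabs_Ropp in Psi_inv by lra.
  rewrite ln_div in Psi_ratio by lra.
  pose proof (Rabs_triang_inv (ln Y) (ln X)); pose proof (Rabs_pos (ln Y - ln X)).
  lra.
Qed.

Lemma abs_ln_gt a K : 0 < a -> a < exp (- K) \/ exp K < a -> K < Rabs (ln a).
Proof.
  intros a_gt0 [a_small | a_large].
  - pose proof (ln_increasing _ _ a_gt0 a_small) as ln_small.
    pose proof (RRle_abs (- ln a)) as abs_bound.
    rewrite ln_exp in ln_small; rewrite Rabs_Ropp in abs_bound; lra.
  - pose proof (ln_increasing _ _ (exp_pos K) a_large) as ln_large.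
    rewrite ln_exp in ln_large; pose proof (RRle_abs (ln a)); lra.
Qed.

Lemma V_radially_unbounded M :
  exists delta, 0 < delta /\
    forall X Y, 0 < X -> 0 < Y ->
      (X < delta \/ Y < delta \/ 1 / delta < X + Y) -> M < V X Y.
Proof.
  set (K := M + 2).
  pose proof (exp_pos K); pose proof (exp_pos (- K)).
  exists (exp (- K) / 2); split; [lra |].
  intros X Y X_gt0 Y_gt0 near_boundary.
  destruct (V_ge_abs_ln X Y X_gt0 Y_gt0) as [VX VY].
  replace (1 / (exp (- K) / 2)) with (2 * exp K) in near_boundary
    by (rewrite exp_Ropp; field; lra).
  assert (far : K < Rabs (ln X) \/ K < Rabs (ln Y)).
  { destruct near_boundary as [X_small | [Y_small | XY_large]].
    - left; apply abs_ln_gt; lra.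
    - right; apply abs_ln_gt; lra.
    - destruct (Rlt_or_le (exp K) X); [left | right]; apply abs_ln_gt; lra. }
  unfold K in far; lra.
Qed.

Theorem mainTheorem5 :
  (forall (x y : R -> R) (t : R),
      0 < x t -> 0 < y t ->
      derivable_pt_lim x t ((1 - y t) * x t) ->
      derivable_pt_lim y t ((x t - Ufb (x t) (y t)) * y t) ->
      derivable_pt_lim (fun s => V (x s) (y s)) t (Vdot (x t) (y t)))
  /\
  (Vdot 1 1 = 0 /\
   forall X Y : R, 0 < X -> 0 < Y -> (X, Y) <> (1, 1) -> Vdot X Y < 0)
  /\
  (V 1 1 = 0 /\
   forall X Y : R, 0 < X -> 0 < Y -> (X, Y) <> (1, 1) -> 0 < V X Y)
  /\
  (forall M : R, exists delta : R, 0 < delta /\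
     forall X Y : R, 0 < X -> 0 < Y ->
       (X < delta \/ Y < delta \/ 1 / delta < X + Y) -> M < V X Y).
Proof.
  split; [exact V_closed_loop_derivative |].
  split; [exact Vdot_negative_definite |].
  split; [exact V_positive_definite |].
  exact V_radially_unbounded.
Qed.
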